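(* Let $X=X_\sigma$ be the root monoid associated with a cone $\sigma$, a $k$-dimensional regular face $\tau$ with primitive ray generators $p_1,\ldots,p_k$, and a compatible set of Demazure roots $\{e_1^{(r)},e_2^{(r)}\}_{r=1}^k$, and assume the vectors $e_2^{(1)}-e_1^{(1)},\ldots,e_2^{(k)}-e_1^{(k)}$ are linearly independent (i.e. the group of invertible elements is active). Then the center $Z(X)=\{x\in X: x*y=y*x\ \forall y\in X\}$ equals $$Z(X)=\overline{O_\tau}\cap\{x\in X:\chi^{u+e_1^{(r)}}(x)=\chi^{u+e_2^{(r)}}(x)\ \text{for all }(r,u)\in I\},$$ where $I=\{(r,u): r\in\{1,\ldots,k\},\ u\in S_\sigma,\ \langle p_j,u\rangle=\delta_{jr}\ \text{for all } j=1,\ldots,k\}$.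
   Context: $\mathbb{K}$ algebraically closed of characteristic zero; $N$ lattice, $M$ dual, $S_\sigma=\sigma^\vee\cap M$, $X_\sigma=\operatorname{Spec}\bigoplus_{u\in S_\sigma}\mathbb{K}\chi^u$. $O_\tau$ is the torus orbit consisting of points $x$ with $\chi^u(x)\ne0$ iff $u\in\tau^\perp$; its closure $\overline{O_\tau}$ is the set of $x$ with $\chi^u(x)=0$ for all $u\in S_\sigma\setminus\tau^\perp$. Regular face: primitive ray generators extend to a basis of $N$. Demazure root for ray generator $p_i$ of $\sigma$: $e\in M$, $\langle p_i,e\rangle=-1$, $\langle p_j,e\rangle\ge0$ for the other ray generators. Compatibility: $\langle p_s,e_1^{(r)}\rangle=\langle p_s,e_2^{(r)}\rangle=-\delta_{rs}$. The root monoid is $X_\sigma$ with multiplication $\chi^u(x*y)=\sum_{\bar i+\bar j=\langle\bar p,u\rangle}\prod_r\binom{\langle p_r,u\rangle}{i_r}\chi^{u+\sum_ri_re_2^{(r)}}(x)\chi^{u+\sum_rj_re_1^{(r)}}(y)$, with $\langle\bar p,u\rangle=(\langle p_1,u\rangle,\ldots,\langle p_k,u\rangle)$ (dual to the comultiplication $\chi^u\mapsto\chi^u\otimes\chi^u\prod_r(1\otimes\chi^{e_1^{(r)}}+\chi^{e_2^{(r)}}\otimes1)^{\langle p_r,u\rangle}$). *)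

From mathcomp Require Import all_boot all_order all_algebra.
Set Implicit Arguments. Unset Strict Implicit. Unset Printing Implicit Defensive.
Import Order.TTheory GRing.Theory Num.Theory.
Local Open Scope ring_scope.

(* Lattices N = M = Z^n, realized as integer row vectors; pairing = dot product. *)
Definition lvec (n : nat) := 'rV[int]_n.

Definition pair {n} (v u : lvec n) : int := \sum_(i < n) v 0 i * u 0 i.

Definition toQ {n} (v : lvec n) : 'rV[rat]_n := map_mx (fun z : int => z%:~R) v.

(* primitive lattice vector: not a proper integer multiple (implies v <> 0) *)
Definition primitive {n} (v : lvec n) : Prop :=
  forall (d : int) (w : lvec n), v = d *: w -> `|d| = 1.

(* All ray generators of sigma: the rays p (of the face tau) followed by q. *)
Definition rays {n k l} (p : 'I_k -> lvec n) (q : 'I_l -> lvec n)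
  (i : 'I_(k + l)) : lvec n :=
  match split i with inl r => p r | inr j => q j end.

(* R is exactly the list of primitive ray generators of a strongly convex
   rational polyhedral cone sigma = cone(R). *)
Definition ray_generators {n m} (R : 'I_m -> lvec n) : Prop :=
  [/\ forall i, primitive (R i),
      (forall c : 'I_m -> rat, (forall i, 0 <= c i) ->
         \sum_i c i *: toQ (R i) = 0 -> forall i, c i = 0)
    &
      (forall i, ~ exists c : 'I_m -> rat,
         [/\ forall j, 0 <= c j, c i = 0 & toQ (R i) = \sum_j c j *: toQ (R j)])].

Definition inS {n m} (R : 'I_m -> lvec n) (u : lvec n) : bool :=
  [forall i, 0 <= pair (R i) u].

Definition is_face {n k l} (p : 'I_k -> lvec n) (q : 'I_l -> lvec n) : Prop :=
  exists m0 : lvec n, (forall r, pair (p r) m0 = 0) /\ (forall j, 0 < pair (q j) m0).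

(* regular face: p_1..p_k extend to a basis of N (rows of a unimodular matrix) *)
Definition regular {n k} (p : 'I_k -> lvec n) : Prop :=
  exists A : 'M[int]_n, A \in unitmx /\ forall r, exists i, row i A = p r.

Definition compatible_roots {n k l} (p : 'I_k -> lvec n) (q : 'I_l -> lvec n)
  (e1 e2 : 'I_k -> lvec n) : Prop :=
  forall r,
    [/\ forall s, pair (p s) (e1 r) = - (r == s)%:~R,
        forall s, pair (p s) (e2 r) = - (r == s)%:~R,
        forall j, 0 <= pair (q j) (e1 r)
      & forall j, 0 <= pair (q j) (e2 r)].

Definition lin_indep {n k} (v : 'I_k -> lvec n) : Prop :=
  forall c : 'I_k -> int, \sum_r c r *: v r = 0 -> forall r, c r = 0.

(* K-points of X_sigma = Spec K[S_sigma]: monoid morphisms (S_sigma,+) -> (K,.),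
   extended by 0 outside S_sigma so that x u = chi^u(x). *)
Definition is_point {K : fieldType} {n m} (R : 'I_m -> lvec n)
  (x : lvec n -> K) : Prop :=
  [/\ x 0 = 1,
      forall u v, inS R u -> inS R v -> x (u + v) = x u * x v
    & forall u, ~~ inS R u -> x u = 0].

Definition rmul {K : fieldType} {n k l} (p : 'I_k -> lvec n) (q : 'I_l -> lvec n)
  (e1 e2 : 'I_k -> lvec n) (x y : lvec n -> K) (u : lvec n) : K :=
  let a := fun r => `|pair (p r) u|%N in
  let d := (\sum_(r < k) a r)%N in
  if inS (rays p q) u then
    \sum_(i : {ffun 'I_k -> 'I_d.+1} | [forall r, (i r <= a r)%N])
      (\prod_(r < k) ('C(a r, i r))%:R)
      * x (u + \sum_(r < k) e2 r *+ i r)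
      * y (u + \sum_(r < k) e1 r *+ (a r - i r))
  else 0.

(* For x in the closure of O_tau (x vanishes on S_sigma outside tau^perp), only
   one term of the binomial expansion survives in x * y and in y * x: writing
   a_r = <p_r, u> and x(u) for chi^u(x),
     (x * y)(u) = x(u + sum_r a_r e2_r) y(u),
     (y * x)(u) = y(u) x(u + sum_r a_r e1_r).
   Such an x is therefore central iff x(u + sum a_r e1_r) = x(u + sum a_r e2_r)
   for all u; trading one e1_r for e2_r at a time reduces this to the case
   a = delta_r, which is the second condition (take y = the unit point).
   Conversely, testing centrality of x against the points of O_tau, i.e. the
   characters t of tau^perp extended by zero, gives
     x(u) t(u + sum a_r e1_r) = t(u + sum a_r e2_r) x(u).
   If a <> 0 then sum a_r (e2_r - e1_r) <> 0 by linear independence, and in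
   characteristic zero some character (v |-> 2^(v_i)) is not 1 on it, so
   x(u) = 0. *)

From HB Require Import structures.
From Pilot Require Import Defs.
From mathcomp Require Import all_boot all_order all_algebra zify ring.
From Stdlib Require Import FunctionalExtensionality.
Import Order.TTheory GRing.Theory Num.Theory.
Local Open Scope ring_scope.

Section Pairing.
Variables (n : nat) (v : lvec n).

Fact pair_is_zmod_morphism : zmod_morphism (pair v).
Proof.
by move=> u w; rewrite /pair -sumrB; apply: eq_bigr => i _; rewrite !mxE mulrBr.
Qed.

HB.instance Definition _ :=
  GRing.isZmodMorphism.Build (lvec n) int (pair v) pair_is_zmod_morphism.

End Pairing.

Lemma sumr_nat_delta {V : nmodType} {I : finType} (F : I -> V) (r : I) :
  \sum_s F s *+ (s == r) = F r.
Proof. by rewrite (bigD1 r) //= eqxx big1 ?addr0 // => s /negbTE ->. Qed.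

Lemma sumr_nat_pred {V : nmodType} {I : finType} (F : I -> V)
    {m : I -> nat} {r : I} :
  (0 < m r)%N -> \sum_s F s *+ m s = F r + \sum_s F s *+ (m s - (s == r)).
Proof.
move=> m_gt0; rewrite -(sumr_nat_delta F r) -big_split; apply: eq_bigr => s _ /=.
by rewrite -mulrnDr; case: eqVneq => [->|_] /=; rewrite ?subn0 // addnC subnK.
Qed.

Definition unit_point (K : fieldType) {n m} (R : 'I_m -> lvec n) (w : lvec n)
    : K :=
  if inS R w then 1 else 0.

Lemma inS0 {n m} (R : 'I_m -> lvec n) : inS R 0.
Proof. by apply/forallP => i; rewrite raddf0. Qed.

Lemma inSD {n m} (R : 'I_m -> lvec n) u v : inS R u -> inS R v -> inS R (u + v).
Proof.
move=> /forallP Ru /forallP Rv; apply/forallP => i.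
by rewrite raddfD addr_ge0 ?Ru ?Rv.
Qed.

Lemma unit_point_is_point (K : fieldType) {n m} (R : 'I_m -> lvec n) :
  is_point R (unit_point K R).
Proof.
split=> [|u v Ru Rv|u /negbTE Ru]; rewrite /unit_point ?inS0 ?Ru //.
by rewrite inSD // Rv mulr1.
Qed.

Section Characters.
Context {K : fieldType}.
Hypothesis charK0 : [pchar K] =i pred0.

Lemma pchar0_exp2z_eq1 (m : int) : (2 : K) ^ m = 1 -> m = 0.
Proof.
have exp2n_eq1 j : (2 : K) ^+ j = 1 -> j = 0%N.
  move=> two_j; have := (pcharf0P K).1 charK0 (2 ^ j - 1)%N.
  rewrite natrB ?expn_gt0 // natrX two_j subrr eqxx subn_eq0 => /esym.
  by rewrite -[1%N](expn0 2) leq_exp2l // leqn0 => /eqP.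
case: m => j /=; first by rewrite -exprnP => /exp2n_eq1 ->.
by move/eqP; rewrite invr_eq1 => /eqP /exp2n_eq1.
Qed.

Lemma exists_character_neq1 {n} {D : lvec n} : D != 0 ->
  exists t : lvec n -> K,
    [/\ t 0 = 1, {morph t : u v / u + v >-> u * v} & t D != 1].
Proof.
move=> D_neq0; have [i Di_neq0] : exists i, D 0 i != 0.
  apply/existsP; apply: contraR D_neq0; rewrite negb_exists => /forallP D0.
  by apply/eqP/rowP => i; rewrite mxE; apply/eqP; rewrite -[_ == _]negbK D0.
have two_neq0 : (2 : K) != 0 by rewrite ((pcharf0P K).1 charK0 2).
exists (fun v => 2 ^ v 0 i); split=> [|u v|]; first by rewrite mxE expr0z.
  by rewrite mxE expfzDr.
by apply: contra Di_neq0 => /eqP /pchar0_exp2z_eq1 ->.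
Qed.

End Characters.

Section RootMonoid.
Context {n k l : nat} {p : 'I_k -> lvec n} {q : 'I_l -> lvec n}.
Local Notation sigma := (rays p q).

Lemma inS_raysP u :
  reflect ((forall r, 0 <= pair (p r) u) /\ (forall j, 0 <= pair (q j) u))
          (inS sigma u).
Proof.
apply: (iffP forallP) => [Su | [Pu Qu] i]; last by rewrite /rays; case: (split i).
split=> [r|j]; first by move: (Su (lshift l r)); rewrite /rays (unsplitK (inl r)).
by move: (Su (rshift k j)); rewrite /rays (unsplitK (inr j)).
Qed.

Definition pdeg (u : lvec n) (r : 'I_k) : nat := `|pair (p r) u|%N.

Lemma pdegE u r : inS sigma u -> (pdeg u r)%:Z = pair (p r) u.
Proof. by case/inS_raysP => Pu _; rewrite /pdeg gez0_abs. Qed.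

Definition demazure_family (e : 'I_k -> lvec n) :=
  forall r, (forall s, pair (p s) (e r) = - (r == s)%:~R) /\
            (forall j, 0 <= pair (q j) (e r)).

Section DemazureFamily.
Context {e : 'I_k -> lvec n} (he : demazure_family e).

Lemma pair_add_roots s u (m : 'I_k -> nat) :
  pair (p s) (u + \sum_r e r *+ m r) = pair (p s) u - (m s)%:Z.
Proof.
rewrite raddfD raddf_sum (bigD1 s) //= big1 => [|r /negbTE rs].
  by rewrite addr0 raddfMn /= (he s).1 eqxx mulNrn natz.
by rewrite raddfMn /= (he r).1 rs oppr0 mul0rn.
Qed.

Lemma inS_add_roots u (m : 'I_k -> nat) :
  inS sigma u -> (forall r, m r <= pdeg u r)%N ->
  inS sigma (u + \sum_r e r *+ m r).
Proof.
move=> Su le_m; have /inS_raysP [_ Qu] := Su; apply/inS_raysP; split=> [s|j].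
  by rewrite pair_add_roots -pdegE // subr_ge0 lez_nat le_m.
rewrite raddfD raddf_sum addr_ge0 ?Qu // sumr_ge0 // => r _.
by rewrite raddfMn /= mulrn_wge0 // (he r).2.
Qed.

Lemma inS_add_root u r :
  inS sigma u -> (0 < pdeg u r)%N -> inS sigma (u + e r).
Proof.
move=> Su r_gt0; rewrite -(sumr_nat_delta e r); apply: inS_add_roots => // s.
by case: eqVneq => [->|].
Qed.

Lemma pdeg_add_root u r : inS sigma u -> (0 < pdeg u r)%N ->
  pdeg (u + e r) =1 (fun s => pdeg u s - (s == r))%N.
Proof.
move=> Su r_gt0 s; apply/eqP; rewrite -eqz_nat pdegE ?inS_add_root //.
rewrite raddfD /= (he r).1 -pdegE // (eq_sym r).
by case: (eqVneq s r) => [->|_] /=; rewrite ?subn0 ?subr0 // subzn.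
Qed.

End DemazureFamily.

Definition in_tau_perp (w : lvec n) := [forall r, pair (p r) w == 0].

Lemma in_tau_perpD u v : inS sigma u -> inS sigma v ->
  in_tau_perp (u + v) = in_tau_perp u && in_tau_perp v.
Proof.
move=> /inS_raysP[Pu _] /inS_raysP[Pv _].
apply/forallP/andP => [uv0 | [/forallP u0 /forallP v0] r].
  have uv0' r : (pair (p r) u == 0) && (pair (p r) v == 0).
    by rewrite -(paddr_eq0 (Pu r) (Pv r)) -raddfD uv0.
  by split; apply/forallP => r; case/andP: (uv0' r).
by rewrite raddfD /= (eqP (u0 r)) (eqP (v0 r)) addr0.
Qed.

Context {K : fieldType}.

Definition face_point (t : lvec n -> K) (w : lvec n) : K :=
  if inS sigma w && in_tau_perp w then t w else 0.

Lemma face_point_is_point t : t 0 = 1 -> {morph t : u v / u + v >-> u * v} ->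
  is_point sigma (face_point t).
Proof.
move=> t0 tD; split=> [|u v Su Sv|u /negbTE Su]; rewrite /face_point.
- rewrite inS0 t0; suff -> : in_tau_perp 0 by [].
  by apply/forallP => r; rewrite raddf0.
- rewrite inSD // Su Sv in_tau_perpD //.
  by case: (in_tau_perp u); case: (in_tau_perp v); rewrite /= ?mul0r ?mulr0 ?tD.
- by rewrite Su.
Qed.

Lemma face_pointE t w : inS sigma w -> (forall r, pair (p r) w = 0) ->
  face_point t w = t w.
Proof.
move=> Sw w0; rewrite /face_point Sw; suff -> : in_tau_perp w by [].
by apply/forallP => r; rewrite w0.
Qed.

Definition in_orbit_closure (x : lvec n -> K) :=
  forall u, inS sigma u -> (exists r, pair (p r) u != 0) -> x u = 0.

Lemma face_point_in_orbit_closure t : in_orbit_closure (face_point t).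
Proof.
move=> u _ [r pu_neq0]; rewrite /face_point; suff -> : in_tau_perp u = false.
  by rewrite andbF.
by apply/negbTE/forallPn; exists r.
Qed.

Context {e1 e2 : 'I_k -> lvec n}.
Hypothesis roots : compatible_roots p q e1 e2.

Lemma demazure_roots1 : demazure_family e1.
Proof. by move=> r; have [? _ ? _] := roots r. Qed.

Lemma demazure_roots2 : demazure_family e2.
Proof. by move=> r; have [_ ? _ ?] := roots r. Qed.

Local Notation rmul := (@Defs.rmul K _ _ _ p q e1 e2).

Definition central (x : lvec n -> K) :=
  forall y, is_point sigma y -> rmul x y = rmul y x.

Definition swap_invariant (x : lvec n -> K) :=
  forall r u, inS sigma u -> (forall j, pair (p j) u = (j == r)%:~R) ->
    x (u + e1 r) = x (u + e2 r).

Lemma rmul_single_term x y u (i0 : 'I_k -> nat) :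
  inS sigma u -> (forall r, i0 r <= pdeg u r)%N ->
  (forall i : 'I_k -> nat, (forall r, i r <= pdeg u r)%N ->
     (exists r, i r != i0 r) ->
     x (u + \sum_r e2 r *+ i r) * y (u + \sum_r e1 r *+ (pdeg u r - i r)) = 0) ->
  rmul x y u = (\prod_r ('C(pdeg u r, i0 r))%:R) *
    x (u + \sum_r e2 r *+ i0 r) * y (u + \sum_r e1 r *+ (pdeg u r - i0 r)).
Proof.
move=> Su le_i0 other0; rewrite /Defs.rmul Su.
have lt_i0 r : (i0 r < (\sum_s pdeg u s).+1)%N.
  by rewrite ltnS (leq_trans (le_i0 r)) // (bigD1 r) //= leq_addr.
pose f0 : {ffun 'I_k -> 'I_(\sum_s pdeg u s).+1} := [ffun r => Ordinal (lt_i0 r)].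
rewrite (bigD1 f0) /=; last by apply/forallP => r; rewrite ffunE; apply: le_i0.
rewrite [X in _ + X]big1 ?addr0 => [|i /andP[/forallP le_i ne_i]].
  by congr (_ * x (u + _) * y (u + _)); apply: eq_bigr => r _; rewrite ffunE.
have [r ne_r] : exists r, (i r : nat) != i0 r.
  apply/existsP; rewrite -negb_forall; apply: contra ne_i => /forallP eq_i.
  by apply/eqP/ffunP => r; apply: val_inj; rewrite /f0 ffunE; apply/eqP/eq_i.
by rewrite -mulrA (other0 (fun r => i r)) ?mulr0 //; exists r.
Qed.

Lemma rmul_orbit_closure_l x y u : in_orbit_closure x -> inS sigma u ->
  rmul x y u = x (u + \sum_r e2 r *+ pdeg u r) * y u.
Proof.
move=> clx Su; rewrite (rmul_single_term x y u (pdeg u)) // => [|i le_i [r ne_r]].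
  rewrite big1 => [|r _]; last by rewrite binn.
  by rewrite mul1r [in y _]big1 ?addr0 // => r _; rewrite subnn.
rewrite clx ?mul0r //; first exact: inS_add_roots demazure_roots2 _ _ Su le_i.
exists r; rewrite (pair_add_roots demazure_roots2) -pdegE //.
by rewrite subr_eq0 eqz_nat eq_sym.
Qed.

Lemma rmul_orbit_closure_r x y u : in_orbit_closure y -> inS sigma u ->
  rmul x y u = x u * y (u + \sum_r e1 r *+ pdeg u r).
Proof.
move=> cly Su.
rewrite (rmul_single_term x y u (fun=> 0%N)) // => [|i le_i [r ne_r]].
  rewrite big1 => [|r _]; last by rewrite bin0.
  rewrite mul1r [in x _]big1 ?addr0 //.
  by congr (_ * y (u + _)); apply: eq_bigr => r _; rewrite subn0.
rewrite cly ?mulr0 //.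
  by apply: (inS_add_roots demazure_roots1) => // s; apply: leq_subr.
exists r; rewrite (pair_add_roots demazure_roots1) -pdegE //.
by move: (le_i r) ne_r; lia.
Qed.

Lemma swap_invariant_sum_roots x u : swap_invariant x -> inS sigma u ->
  x (u + \sum_r e1 r *+ pdeg u r) = x (u + \sum_r e2 r *+ pdeg u r).
Proof.
move=> swx; have [N] := ubnP (\sum_r pdeg u r); elim: N u => // N IH u lt_N Su.
have [r r_gt0 | deg0] := pickP (fun r => 0 < pdeg u r)%N; last first.
  by rewrite !big1 // => r _; move/negbT: (deg0 r); rewrite -eqn0Ngt => /eqP ->.
pose u' := u + e1 r.
have Su' : inS sigma u' := inS_add_root demazure_roots1 _ _ Su r_gt0.
have deg' := pdeg_add_root demazure_roots1 _ _ Su r_gt0.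
have lt_deg : (\sum_s pdeg u' s < \sum_s pdeg u s)%N.
  rewrite [ltnRHS](bigD1 r) // [ltnLHS](bigD1 r) //= deg' eqxx.
  rewrite (eq_bigr (pdeg u)) => [|s /negbTE ne_sr]; last first.
    by rewrite deg' ne_sr subn0.
  by rewrite ltn_add2r subn1 prednK.
have e1_shift : u' + \sum_s e1 s *+ pdeg u' s = u + \sum_s e1 s *+ pdeg u s.
  rewrite (sumr_nat_pred _ r_gt0) addrA.
  by congr (_ + _); apply: eq_bigr => s _; rewrite deg'.
pose v := u + \sum_s e2 s *+ pdeg u' s.
have Sv : inS sigma v.
  by apply: (inS_add_roots demazure_roots2) => // s; rewrite deg' leq_subr.
have v_deg j : pair (p j) v = (j == r)%:~R.
  rewrite (pair_add_roots demazure_roots2) -pdegE // deg'.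
  by case: eqVneq => [->|_] /=; move: r_gt0; lia.
rewrite -e1_shift IH //; last by move: lt_deg lt_N; lia.
have -> : u' + \sum_s e2 s *+ pdeg u' s = v + e1 r by rewrite addrAC.
rewrite swx // (sumr_nat_pred _ r_gt0) /v -addrA [_ + e2 r]addrC.
by congr (x (u + (_ + _))); apply: eq_bigr => s _; rewrite deg'.
Qed.

Lemma orbit_closure_swap_central x :
  in_orbit_closure x -> swap_invariant x -> central x.
Proof.
move=> clx swx y _; apply: functional_extensionality => u.
have [Su|notSu] := boolP (inS sigma u); last by rewrite /Defs.rmul (negbTE notSu).
rewrite rmul_orbit_closure_l // rmul_orbit_closure_r //.
by rewrite swap_invariant_sum_roots // mulrC.
Qed.

Lemma central_swap_invariant x :
  central x -> in_orbit_closure x -> swap_invariant x.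
Proof.
move=> cx clx r v Sv v_deg.
have sum_v (e : 'I_k -> lvec n) : \sum_s e s *+ pdeg v s = e r.
  rewrite -(sumr_nat_delta e r); apply: eq_bigr => s _.
  by rewrite /pdeg v_deg; case: (s == r).
have := congr1 (fun f => f v) (cx _ (unit_point_is_point K sigma)).
rewrite rmul_orbit_closure_l // rmul_orbit_closure_r //.
rewrite /unit_point Sv mulr1 mul1r.
by rewrite !sum_v => ->.
Qed.

Lemma central_face_point x t w :
  central x -> t 0 = 1 -> {morph t : u v / u + v >-> u * v} -> inS sigma w ->
  x w * t (w + \sum_r e1 r *+ pdeg w r) = t (w + \sum_r e2 r *+ pdeg w r) * x w.
Proof.
move=> cx t0 tD Sw.
have on_face e : demazure_family e ->
    face_point t (w + \sum_r e r *+ pdeg w r) = t (w + \sum_r e r *+ pdeg w r).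
  move=> he; apply: face_pointE; first exact: inS_add_roots.
  by move=> r; rewrite (pair_add_roots he) -pdegE // subrr.
have := congr1 (fun f => f w) (cx _ (face_point_is_point _ t0 tD)).
rewrite rmul_orbit_closure_r ?rmul_orbit_closure_l //;
  try exact: face_point_in_orbit_closure.
by rewrite (on_face _ demazure_roots1) (on_face _ demazure_roots2).
Qed.

Lemma central_in_orbit_closure x : [pchar K] =i pred0 ->
  lin_indep (fun r => e2 r - e1 r) -> central x -> in_orbit_closure x.
Proof.
move=> charK0 indep cx w Sw [r pw_neq0].
pose D := \sum_s (e2 s - e1 s) *+ pdeg w s.
have D_neq0 : D != 0.
  apply: contra pw_neq0 => /eqP D0.
  have /indep/(_ r)/eqP : \sum_s (pdeg w s)%:R *: (e2 s - e1 s) = 0.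
    by rewrite -[RHS]D0; apply: eq_bigr => s _; rewrite scaler_nat.
  by rewrite -pdegE // natz.
have [t [t0 tD tD_neq1]] := exists_character_neq1 charK0 D_neq0.
have := central_face_point x t w cx t0 tD Sw.
have -> : w + \sum_s e2 s *+ pdeg w s = (w + \sum_s e1 s *+ pdeg w s) + D.
  by rewrite /D (eq_bigr _ (fun s _ => mulrnBl _ _ _)) sumrB -addrA subrKC.
rewrite [t (_ + D)]tD; set A := w + _ => xtA.
have tA_neq0 : t A != 0.
  apply/eqP => tA0; have := tD A (- A).
  by rewrite subrr t0 tA0 mul0r => /eqP; rewrite oner_eq0.
have : x w * t A * (1 - t D) = 0 by rewrite mulrBr mulr1 [X in X - _]xtA; ring.
move/eqP; rewrite !mulf_eq0 subr_eq0 (eq_sym 1) (negbTE tA_neq0) (negbTE tD_neq1).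
by rewrite !orbF => /eqP.
Qed.

End RootMonoid.

Theorem mainTheorem12 (K : closedFieldType) (hK : [pchar K] =i pred0)
  (n k l : nat) (p : 'I_k -> lvec n) (q : 'I_l -> lvec n)
  (e1 e2 : 'I_k -> lvec n)
  (hrays : ray_generators (rays p q))
  (hface : is_face p q)
  (hreg : regular p)
  (hroots : compatible_roots p q e1 e2)
  (hind : lin_indep (fun r => e2 r - e1 r))
  (x : lvec n -> K) (hx : is_point (rays p q) x) :
  (forall y : lvec n -> K, is_point (rays p q) y ->
     rmul p q e1 e2 x y = rmul p q e1 e2 y x)
  <->
  ((forall u, inS (rays p q) u -> (exists r, pair (p r) u != 0) -> x u = 0)
   /\
   (forall (r : 'I_k) (u : lvec n), inS (rays p q) u ->
      (forall j, pair (p j) u = (j == r)%:~R) ->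
      x (u + e1 r) = x (u + e2 r))).
Proof.
split=> [x_central | [x_closure x_swap]].
  have x_closure := central_in_orbit_closure hroots x hK hind x_central.
  by split; last exact: central_swap_invariant hroots x x_central x_closure.
exact: orbit_closure_swap_central hroots x x_closure x_swap.
Qed.
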